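(* Let $G=(V,E)$ be a finite graph and let $T$ be a set of orderings of $V$. Then there exists a strict partial order $\prec$ on $P_f(\mathbb{N}^+)$ such that $T=\{\mathrm{TBLS}(G,\prec,\tau) : \tau \text{ an ordering of } V\}$ if and only if there exists a labeling structure $S=(L,\prec_{GLS},l_0,\mathrm{UPLAB})$ such that $T$ equals the set of all orderings that can be produced by $\mathrm{GLS}(G,S)$.
   Context: $G$ has $n$ vertices; an ordering of $V$ is a bijection $\sigma:\{1,\dots,n\}\to V$. $P_f(\mathbb{N}^+)$ is the set of finite subsets of positive integers. $\mathrm{TBLS}(G,\prec,\tau)$ (for a strict partial order $\prec$ on $P_f(\mathbb{N}^+)$ and ordering $\tau$ of $V$) is the procedure: set $label(v)=\emptyset$ for every $v$; for $i=1,\dots,n$: let Eligible be the set of unnumbered vertices $x$ such that there is no unnumbered vertex $y$ with $label(x)\prec label(y)$; let $v$ be the first vertex of Eligible in $\tau$; set $\sigma(i)=v$ ($v$ becomes numbered); for every unnumbered neighbour $w$ of $v$ replace $label(w)$ by $label(w)\cup\{i\}$; output $\sigma$. A labeling structure is a quadruple $S=(L,\prec_{GLS},l_0,\mathrm{UPLAB})$ where $L$ is an arbitrary set, $\prec_{GLS}$ a strict partial order on $L$, $l_0\in L$, and $\mathrm{UPLAB}:L\times\mathbb{N}^+\to L$ a function. The General Label Search $\mathrm{GLS}(G,S)$ is the nondeterministic procedure: set $l(v)=l_0$ for every $v$; for $i=1,\dots,n$: let Eligible be the set of unnumbered vertices $v$ such that there is no unnumbered $y$ with $l(v)\prec_{GLS}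 l(y)$; choose any $v$ in Eligible; set $\sigma(i)=v$; for every unnumbered neighbour $w$ of $v$ set $l(w)=\mathrm{UPLAB}(l(w),i)$; output $\sigma$. The orderings produced by $\mathrm{GLS}(G,S)$ are all outputs over all possible choices. *)

From mathcomp Require Import all_boot.
From mathcomp Require Import finmap.
Set Implicit Arguments. Unset Strict Implicit. Unset Printing Implicit Defensive.
Local Open Scope fset_scope.

Definition strict_partial_order (A : Type) (lt : A -> A -> Prop) : Prop :=
  (forall x, ~ lt x x) /\ (forall x y z, lt x y -> lt y z -> lt x z).

Section LabelSearch.
Variables (V : finType) (e : rel V).

Definition simple_graph : Prop := irreflexive e /\ symmetric e.

(* An ordering sigma : {1..n} -> V (bijection) is represented by the
   sequence [sigma(1); ...; sigma(n)]. *)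
Definition ordering (s : seq V) : Prop := uniq s /\ size s = #|V|.

(* Label of vertex w (unnumbered) after the vertices p = [p_1;...;p_k] have
   been numbered 1..k in this order: starting from l0, for i = 1..k, if w is a
   neighbour of p_i, apply UPLAB(_, i). *)
Definition gls_label (L : Type) (l0 : L) (uplab : L -> nat -> L)
  (p : seq V) (w : V) : L :=
  foldl (fun l iv => if e iv.2 w then uplab l iv.1 else l) l0
        (zip (iota 1 (size p)) p).

Definition eligible (L : Type) (lt : L -> L -> Prop) (lab : V -> L)
  (p : seq V) (x : V) : Prop :=
  x \notin p /\ forall y, y \notin p -> ~ lt (lab x) (lab y).

Definition gls_output (L : Type) (lt : L -> L -> Prop) (l0 : L)
  (uplab : L -> nat -> L) (s : seq V) : Prop :=
  ordering s /\
  forall p v q, s = p ++ v :: q -> eligible lt (gls_label l0 uplab p) p v.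

Definition tbls_label (p : seq V) (w : V) : {fset nat} :=
  gls_label fset0 (fun l i => l `|` [fset i]) p w.

(* s = TBLS(G, lt, tau): at every step, the vertex chosen is the first
   vertex of Eligible with respect to tau. Since the procedure is
   deterministic, this relation is the graph of the procedure. *)
Definition tbls_output (lt : {fset nat} -> {fset nat} -> Prop)
  (tau s : seq V) : Prop :=
  ordering s /\
  forall p v q, s = p ++ v :: q ->
    eligible lt (tbls_label p) p v /\
    (forall x, eligible lt (tbls_label p) p x -> index v tau <= index x tau).

End LabelSearch.

From mathcomp Require Import all_boot.
From mathcomp Require Import finmap.
Set Implicit Arguments. Unset Strict Implicit. Unset Printing Implicit Defensive.

Local Open Scope fset_scope.

(* TBLS is the instance of GLS whose labels are the sets of indices of the
   numbered neighbours, UPLAB adding the new index. Since GLS only requires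
   each chosen vertex to be eligible, every GLS-valid ordering s is the output
   of TBLS with tie-break tau = s. Conversely, the TBLS label of a vertex
   records exactly the steps at which its label was updated, so replaying
   UPLAB from l0 along the elements of a finite set in increasing order turns
   TBLS labels into GLS labels; pulling the GLS order back along this replay
   gives a strict partial order on finite sets for which TBLS and GLS have the
   same eligible vertices. *)

Lemma iota1S n : iota 1 n.+1 = rcons (iota 1 n) n.+1.
Proof. by rewrite -cats1; have := iotaD 1 n 1; rewrite addn1 add1n. Qed.

Section LabelSearch.
Variables (V : finType) (e : rel V).

Lemma mem_ordering (s : seq V) x : ordering s -> x \in s.
Proof.
case=> s_uniq s_size.
have s_full : #|s| = #|predT : {pred V}| by rewrite (card_uniqP s_uniq) s_size.
by have /subset_cardP/(_ (subset_predT _)) -> := s_full.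
Qed.

Section Outputs.
Variables (L : Type) (lt : L -> L -> Prop) (lab : seq V -> V -> L).

Definition label_search_output (s : seq V) : Prop :=
  ordering s /\ forall p v q, s = p ++ v :: q -> eligible lt (lab p) p v.

Definition tie_break_output (tau s : seq V) : Prop :=
  ordering s /\
  forall p v q, s = p ++ v :: q ->
    eligible lt (lab p) p v /\
    (forall x, eligible lt (lab p) p x -> index v tau <= index x tau).

Lemma label_search_outputE s :
  label_search_output s <-> exists tau, ordering tau /\ tie_break_output tau s.
Proof.
split; last by case=> tau [_ [s_ord s_tie]]; split=> // p v q /s_tie[].
case=> s_ord s_elig; exists s; split=> //; split=> // p v q s_def.
split=> [|x [x_p _]]; first exact: s_elig s_def.
have x_s := mem_ordering x s_ord.
have v_p : v \notin p.
  by case: s_ord => + _; rewrite s_def cat_uniq /= => /and3P[_ /norP[]].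
by rewrite s_def !index_cat (negbTE v_p) (negbTE x_p) /= eqxx addn0 leq_addr.
Qed.

End Outputs.

Lemma label_search_output_iff L L' (lt : L -> L -> Prop) (lt' : L' -> L' -> Prop)
    (lab : seq V -> V -> L) (lab' : seq V -> V -> L') s :
  (forall p x y, lt (lab p x) (lab p y) <-> lt' (lab' p x) (lab' p y)) ->
  label_search_output lt lab s <-> label_search_output lt' lab' s.
Proof.
move=> lt_iff; split=> -[s_ord s_elig]; split=> // p v q /s_elig[v_p v_max];
  by split=> // y y_p /lt_iff; apply: v_max.
Qed.

Lemma gls_label_rcons L (l0 : L) uplab p x w :
  gls_label e l0 uplab (rcons p x) w =
  if e x w then uplab (gls_label e l0 uplab p w) (size p).+1
  else gls_label e l0 uplab p w.
Proof.
by rewrite /gls_label size_rcons iota1S zip_rcons ?size_iota // foldl_rcons.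
Qed.

(* Steps are numbered from 1, so step i numbers the vertex [nth w p i.-1]. *)
Lemma mem_tbls_label p w i :
  (i \in tbls_label e p w) = (0 < i <= size p) && e (nth w p i.-1) w.
Proof.
elim/last_ind: p i => [|p x IHp] i.
  by rewrite in_fset0; case: i.
rewrite /tbls_label gls_label_rcons -/(tbls_label e p w) size_rcons nth_rcons.
have -> : (i \in if e x w then tbls_label e p w `|` [fset (size p).+1]
                else tbls_label e p w)
          = (i \in tbls_label e p w) || (i == (size p).+1) && e x w.
  by case: (e x w); rewrite ?in_fsetU ?in_fset1 ?andbT ?andbF ?orbF.
rewrite IHp; case: i => [|i] //=; rewrite ltnS eqSS.
by case: ltngtP; rewrite ?orbF.
Qed.

Section Replay.
Variables (L : Type) (l0 : L) (uplab : L -> nat -> L).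

Definition replay_upto (A : {fset nat}) n : L :=
  foldl (fun l i => if i \in A then uplab l i else l) l0 (iota 1 n).

Definition replay (A : {fset nat}) : L := replay_upto A (\max_(i <- A) i).

Lemma replay_uptoS A n :
  replay_upto A n.+1 = if n.+1 \in A then uplab (replay_upto A n) n.+1
                       else replay_upto A n.
Proof. by rewrite /replay_upto iota1S foldl_rcons. Qed.

Lemma replay_upto_gls_label A p w :
  (forall i, 0 < i <= size p -> (i \in A) = e (nth w p i.-1) w) ->
  replay_upto A (size p) = gls_label e l0 uplab p w.
Proof.
elim/last_ind: p => [//|p x IHp] A_nbr.
rewrite size_rcons replay_uptoS gls_label_rcons IHp.
  by rewrite A_nbr ?size_rcons ?leqnn //= nth_rcons ltnn eqxx.
move=> i /andP[i_gt0 i_le]; rewrite A_nbr ?size_rcons ?i_gt0 ?(leq_trans i_le) //.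
by rewrite nth_rcons; case: i i_gt0 i_le => // i _ /= ->.
Qed.

Lemma replay_upto_ub A n : (forall i, i \in A -> i <= n) -> replay_upto A n = replay A.
Proof.
move=> A_le_n; pose m := \max_(i <- A) i.
have A_le_m i : i \in A -> i <= m by move=> i_A; apply: leq_bigmax_seq.
have m_le_n : m <= n by apply/bigmax_leqP_seq => i i_A _; apply: A_le_n.
rewrite -(subnKC m_le_n); elim: (n - m) => [|k IHk]; first by rewrite addn0.
rewrite addnS replay_uptoS IHk; case: ifP => // /A_le_m.
by rewrite ltnNge leq_addr.
Qed.

Lemma replay_tbls_label p w : replay (tbls_label e p w) = gls_label e l0 uplab p w.
Proof.
rewrite -(replay_upto_ub (n := size p)) => [|i]; last first.
  by rewrite mem_tbls_label => /andP[/andP[_ ->]].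
by apply: replay_upto_gls_label => i i_range; rewrite mem_tbls_label i_range.
Qed.

End Replay.
End LabelSearch.

Theorem theorem9 (V : finType) (e : rel V) (HG : simple_graph e)
  (T : seq V -> Prop) (HT : forall s, T s -> ordering s) :
  (exists lt : {fset nat} -> {fset nat} -> Prop,
     strict_partial_order lt /\
     (forall s, T s <-> exists tau, ordering tau /\ tbls_output e lt tau s))
  <->
  (exists (L : Type) (lt : L -> L -> Prop) (l0 : L) (uplab : L -> nat -> L),
     strict_partial_order lt /\
     (forall s, T s <-> gls_output e lt l0 uplab s)).
Proof.
split.
- case=> lt [lt_spo T_tbls].
  exists {fset nat}, lt, fset0, (fun l i => l `|` [fset i]); split=> // s.
  by rewrite T_tbls; symmetry; apply: label_search_outputE.
- case=> L [lt [l0 [uplab [[lt_irr lt_trans] T_gls]]]].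
  pose ltr A B := lt (replay l0 uplab A) (replay l0 uplab B).
  exists ltr; split.
    by split=> [A|A B C]; [apply: lt_irr | apply: lt_trans].
  move=> s; rewrite T_gls -(label_search_outputE ltr (tbls_label e)).
  by apply: label_search_output_iff => p x y; rewrite /ltr !replay_tbls_label.
Qed.
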